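(* Let $T$ be a tower gadget of height $h\in\mathbb{N}$ and let $M_1,M_2$ be two perfect matchings of $T$ that are both in semi-default state. Then there exists a well-behaved flip sequence $(P_1,\dots,P_{2h})$ for $T$ starting from $M_1$, of length exactly $2h$, with $M_1\triangle P_1\triangle\cdots\triangle P_{2h}=M_2$.
   Context: A tower gadget of height $h$ is the graph on vertices $\{v,w\}\cup\{a_i,b_i: 0\le i\le h\}$ with edge set $\{va_0,b_0w\}\cup\{a_ib_i:0\le i\le h\}\cup\{a_ia_{i-1},b_ib_{i-1}:1\le i\le h\}$. A perfect matching $M$ of $T$ is in semi-default state if $va_0,b_0w\in M$. A path is alternating w.r.t. an edge set $S$ if its consecutive edges alternate between belonging and not belonging to $S$ (it may start or end with either kind). A well-behaved flip sequence for $T$ starting from $M$ is a sequence $(P_1,\dots,P_d)$ where each $P_i$ is a path from $v$ to $w$ inside $T$ that is alternating with respect to $M\triangle P_1\triangle\cdots\triangle P_{i-1}$ ($\triangle$ = symmetric difference). *)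

From mathcomp Require Import all_boot.
Set Implicit Arguments. Unset Strict Implicit. Unset Printing Implicit Defensive.

(* Vertices of the tower gadget of height h:
   inl true = v, inl false = w, inr (i, true) = a_i, inr (i, false) = b_i,
   with i : 'I_h.+1, i.e. 0 <= i <= h. *)
Definition tvert (h : nat) : finType := (bool + ('I_h.+1 * bool))%type.

Definition vtx_v {h} : tvert h := inl true.
Definition vtx_w {h} : tvert h := inl false.
Definition vtx_a {h} (i : 'I_h.+1) : tvert h := inr (i, true).
Definition vtx_b {h} (i : 'I_h.+1) : tvert h := inr (i, false).

(* One orientation of each edge:
   v a_0, b_0 w, a_i b_i, a_i a_{i-1}, b_i b_{i-1}. *)
Definition tadj0 {h} (x y : tvert h) : bool :=
  match x, y with
  | inl true, inr (i, true) => val i == 0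
  | inr (i, false), inl false => val i == 0
  | inr (i, true), inr (j, false) => val i == val j
  | inr (i, s), inr (j, t) => (s == t) && (val i == (val j).+1)
  | _, _ => false
  end.

Definition tadj {h} (x y : tvert h) : bool := tadj0 x y || tadj0 y x.

Definition edge {h} (x y : tvert h) : {set tvert h} := [set x; y].

Definition tedges (h : nat) : {set {set tvert h}} :=
  [set edge x y | x in tvert h, y in tvert h & tadj x y].

Definition symdiff {T : finType} (A B : {set T}) : {set T} := (A :\: B) :|: (B :\: A).

Definition perfect_matching {h} (M : {set {set tvert h}}) : Prop :=
  M \subset tedges h /\ forall x : tvert h, #|[set e in M | x \in e]| = 1.

Definition semi_default {h} (M : {set {set tvert h}}) : Prop :=
  edge vtx_v (vtx_a ord0) \in M /\ edge (vtx_b ord0) vtx_w \in M.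

Definition path_edges {h} (p : seq (tvert h)) : seq {set tvert h} :=
  match p with
  | [::] => [::]
  | x :: q => pairmap edge x q
  end.

Definition edge_set {h} (p : seq (tvert h)) : {set {set tvert h}} :=
  [set e in path_edges p].

Definition vw_path {h} (p : seq (tvert h)) : bool :=
  match p with
  | [::] => false
  | x :: q => [&& x == vtx_v, last x q == vtx_w, path tadj x q & uniq p]
  end.

Definition alternating {h} (S : {set {set tvert h}}) (p : seq (tvert h)) : bool :=
  match path_edges p with
  | [::] => true
  | e :: es => path (fun e1 e2 => (e1 \in S) != (e2 \in S)) e es
  end.

Fixpoint well_behaved {h} (M : {set {set tvert h}}) (Ps : seq (seq (tvert h))) : bool :=
  match Ps with
  | [::] => true
  | P :: Ps' => [&& vw_path P, alternating M P & well_behaved (symdiff M (edge_set P)) Ps']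
  end.

Definition flip_all {h} (M : {set {set tvert h}}) (Ps : seq (seq (tvert h))) :=
  foldl (fun N P => symdiff N (edge_set P)) M Ps.

From HB Require Import structures.
From mathcomp Require Import all_boot zify.
Set Implicit Arguments. Unset Strict Implicit. Unset Printing Implicit Defensive.

(* A semi-default perfect matching is determined by the rungs [a_i b_i] it uses, the rails
   pairing up in between.  Call a set of edges canonical up to level [p] if below [p] it looks
   like the matching [G] built from [v a_0], [b_0 w] and the rail pairs [a_(2m-1) a_(2m)],
   [b_(2m-1) b_(2m)].  For odd [p], flipping [P_p = v a_0 .. a_p b_p .. b_0 w] and then [P_q],
   where [q] is [p+1] or [p+2] depending on whether level [p+1] carries a rung, toggles exactly
   the cycle [a_p .. a_q b_q .. b_p] and pushes canonicity up to [q]; for even [p] canonicity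
   extends for free.  Hence each [M_i] reaches [G] by [2 d_i <= h] flips.  The sequence for
   [M_1], then [h - d_1 - d_2] idle pairs [(P_h, P_h)] at [G], then the reversed sequence for
   [M_2] (flips are involutions and stay alternating) has length exactly [2h]. *)

Lemma last_iota m n : last m (iota m.+1 n) = m + n.
Proof. by elim: n m => [|n IH] m //=; rewrite ?addn0 // IH addnS. Qed.

Lemma pairmap_map_iota (T U : Type) (f : T -> T -> U) (g : nat -> T) m n :
  pairmap f (g m) (map g (iota m.+1 n)) = map (fun i => f (g i.-1) (g i)) (iota m.+1 n).
Proof. by elim: n m => [|n IH] m //=; rewrite IH. Qed.

Lemma path_map_iota (T : Type) (r : rel T) (g : nat -> T) m n :
  path r (g m) (map g (iota m.+1 n)) = all (fun i => r (g i.-1) (g i)) (iota m.+1 n).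
Proof. by elim: n m => [|n IH] m //=; rewrite IH. Qed.

Lemma in_symdiff (T : finType) (A B : {set T}) x :
  (x \in symdiff A B) = (x \in A) (+) (x \in B).
Proof. by rewrite !inE; case: (x \in A); case: (x \in B). Qed.

Lemma symdiffK (T : finType) (A B : {set T}) : symdiff (symdiff A B) B = A.
Proof. by apply/setP => x; rewrite !in_symdiff -addbA addbb addbF. Qed.

Lemma card_set_mem_seq (T : finType) (s : seq T) (A : {set T}) :
  uniq s -> #|[set x in s | x \in A]| = count (mem A) s.
Proof.
move=> s_uniq; rewrite -size_filter -(card_uniqP (filter_uniq _ s_uniq)) -cardsE.
by apply: eq_card => x; rewrite !inE mem_filter andbC.
Qed.

Section FlipSequences.

Variable h : nat.
Implicit Types (M : {set {set tvert h}}) (P : seq (tvert h)) (Ps : seq (seq (tvert h))).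

Lemma well_behaved_cat M Ps1 Ps2 :
  well_behaved M (Ps1 ++ Ps2) = well_behaved M Ps1 && well_behaved (flip_all M Ps1) Ps2.
Proof. by elim: Ps1 M => [|P Ps IH] M //=; rewrite IH !andbA. Qed.

Lemma flip_all_cat M Ps1 Ps2 : flip_all M (Ps1 ++ Ps2) = flip_all (flip_all M Ps1) Ps2.
Proof. exact: foldl_cat. Qed.

Lemma alternating_symdiff M P :
  alternating M P -> alternating (symdiff M (edge_set P)) P.
Proof.
rewrite /alternating /edge_set; case: (path_edges P) => [|e es] // altP.
apply: etrans altP; apply: (eq_in_path (P := mem (e :: es))); last by apply/allP.
move=> x y; rewrite !inE => x_es y_es.
by rewrite x_es y_es; case: (x \in M); case: (y \in M).
Qed.

Lemma flip_all_rev M Ps : flip_all (flip_all M Ps) (rev Ps) = M.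
Proof.
elim: Ps M => [|P Ps IH] M //.
by rewrite rev_cons -cats1 flip_all_cat IH /= symdiffK.
Qed.

Lemma well_behaved_rev M Ps : well_behaved M Ps -> well_behaved (flip_all M Ps) (rev Ps).
Proof.
elim: Ps M => [|P Ps IH] M //= /and3P [vwP altP wbPs].
rewrite rev_cons -cats1 well_behaved_cat IH //= flip_all_rev vwP andbT.
exact: alternating_symdiff.
Qed.

Lemma well_behaved_repeat M P m : vw_path P -> alternating M P ->
  let Ps := flatten (nseq m [:: P; P]) in
  [/\ size Ps = m.*2, well_behaved M Ps & flip_all M Ps = M].
Proof.
move=> vwP altP; elim: m => [|m [size_Ps wb fa]] //=.
by rewrite size_Ps symdiffK vwP altP alternating_symdiff.
Qed.

End FlipSequences.

Inductive ekind := Rung | Rail of bool.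

Definition ekind_code K := if K is Rail t then Some t else None.
Definition ekind_decode o := if o is Some t then Rail t else Rung.
Lemma ekind_codeK : cancel ekind_code ekind_decode. Proof. by case. Qed.
HB.instance Definition _ := Equality.copy ekind (can_type ekind_codeK).

Lemma eq_Rail t t' : (Rail t == Rail t') = (t == t').
Proof. by apply/eqP/eqP => [[] | ->]. Qed.

Section TowerGadget.

Variable h : nat.
Local Notation vertex := (tvert h).
Local Notation state := {set {set tvert h}}.
Implicit Types (S : state) (t : bool) (i j k p q : nat).

(* [tv true i] and [tv false i] are [a_i] and [b_i]; since [vtx_v = inl true] and
   [vtx_w = inl false], [below t j] is the neighbour of [tv t j] on the way down its side. *)
Definition tv (t : bool) (i : nat) : vertex := inr (inord i, t).

Definition below (t : bool) (j : nat) : vertex := if j is j'.+1 then tv t j' else inl t.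

Definition tedge (K : ekind) (j : nat) : {set vertex} :=
  if K is Rail t then edge (below t j) (tv t j) else edge (tv true j) (tv false j).

Arguments tedge : simpl never.

Lemma tv_val t (i : 'I_h.+1) : tv t i = inr (i, t).
Proof. by rewrite /tv inord_val. Qed.

Lemma eq_tv t t' i j : i <= h -> j <= h -> (tv t i == tv t' j) = (t == t') && (i == j).
Proof.
move=> ih jh; apply/eqP/andP => [[/(congr1 val) /=] | [/eqP-> /eqP->]] //.
by rewrite !inordK // => -> ->.
Qed.

Lemma mem_tedge t i K j : i <= h -> j <= h ->
  (tv t i \in tedge K j) = if K is Rail s then (s == t) && ((j == i) || (j == i.+1)) else j == i.
Proof.
move=> ih jh; case: K => [|s]; rewrite /= in_set2.
  by rewrite !eq_tv // eq_sym; case: t; rewrite ?andbF ?orbF.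
by case: j jh => [|j] jh /=; rewrite ?eq_tv //; lia.
Qed.

Lemma tedge_inj K K' j j' : j <= h -> j' <= h -> tedge K j = tedge K' j' -> K = K' /\ j = j'.
Proof.
move=> jh j'h E.
have memE t i : (tv t i \in tedge K j) = (tv t i \in tedge K' j') by rewrite E.
case: K {E} memE => [|s] memE; case: K' memE => [|s'] memE.
- by have := memE true j; rewrite !mem_tedge // eqxx => /esym/eqP.
- by have := memE (~~ s') j; rewrite !mem_tedge // eqxx; case: s' {memE}.
- by have := memE (~~ s) j'; rewrite !mem_tedge // eqxx; case: s {memE}.
have := memE s j; have := memE s' j'; rewrite !mem_tedge // !eqxx /=.
by case: s s' {memE} => [] [] //=; split => //; lia.
Qed.

Lemma eq_tedge K K' j j' : j <= h -> j' <= h -> (tedge K j == tedge K' j') = (K == K') && (j == j').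
Proof. by move=> jh j'h; apply/eqP/andP => [/tedge_inj [] // -> -> | [/eqP-> /eqP->]]. Qed.

Lemma tadjC (x y : vertex) : tadj x y = tadj y x.
Proof. exact: orbC. Qed.

Lemma tadj_rung i : i <= h -> tadj (tv true i) (tv false i).
Proof. by move=> ih; rewrite /tadj /= eqxx. Qed.

Lemma tadj_rail t j : j <= h -> tadj (below t j) (tv t j).
Proof.
by case: j => [|j] jh; case: t; rewrite /tadj /= ?eqxx !inordK //; lia.
Qed.

Lemma tadj_tedges (x y : vertex) : tadj x y -> edge x y \in tedges h.
Proof. by move=> xy; apply/imset2P; exists x y; rewrite ?inE. Qed.

Lemma tedgesP e : e \in tedges h -> exists K j, j <= h /\ e = tedge K j.
Proof.
have edgeC (x y : vertex) : edge x y = edge y x by exact: setUC.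
case/imset2P => x y _; rewrite inE => /orP xy ->{e}.
wlog {xy} xy : x y / tadj0 x y.
  by move=> Wxy; case: xy => /Wxy //; rewrite edgeC.
case: x y xy => [[]|[i []]] [[]|[j []]] //= /eqP ij;
  rewrite -?(tv_val true i) -?(tv_val false i) -?(tv_val true j) -?(tv_val false j).
- by exists (Rail true), 0; rewrite ij.
- by exists (Rail true), i; split; [exact: leq_ord | rewrite edgeC /= ij].
- by exists Rung, i; split; [exact: leq_ord | rewrite ij].
- by exists (Rail false), 0; rewrite ij edgeC.
- by exists (Rail false), i; split; [exact: leq_ord | rewrite edgeC /= ij].
Qed.

Definition rung S j : bool := tedge Rung j \in S.
Definition rail S t j : bool := tedge (Rail t) j \in S.

(* Position [i] of [tower_path k = v a_0 ... a_k b_k ... b_0 w]. *)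
Definition path_vtx k i : vertex :=
  if i <= k.+1 then below true i else below false (k.*2.+3 - i).

Definition tower_path k : seq vertex := map (path_vtx k) (iota 0 (k.*2.+4)).

Definition path_kind k i : ekind :=
  if i <= k.+1 then Rail true else if i == k.+2 then Rung else Rail false.

Definition path_level k i : nat :=
  if i <= k.+1 then i.-1 else if i == k.+2 then k else k.*2.+3 - i.

Definition path_edge k i : {set vertex} := edge (path_vtx k i.-1) (path_vtx k i).

Lemma path_vtx_step k i : k <= h -> 0 < i <= k.*2.+3 ->
  tadj (path_vtx k i.-1) (path_vtx k i) /\ path_edge k i = tedge (path_kind k i) (path_level k i).
Proof.
move=> kh /andP [i_gt0 i_le]; rewrite /path_edge /path_vtx /path_kind /path_level.
case: i i_gt0 i_le => [|i] // _ i_le /=.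
have [i_le_k|i_gt_k] := leqP i k.
  rewrite leqW // ltnS i_le_k.
  by split => //; apply: tadj_rail; lia.
have -> /= : (i < k.+1) = false by lia.
rewrite eqSS.
have [->|i_neq] := eqVneq i k.+1.
  rewrite leqnn (_ : k.*2.+3 - k.+2 = k.+1) //; last by lia.
  by split => //; apply: tadj_rung.
rewrite ifN; last by lia.
rewrite (_ : k.*2.+3 - i = (k.*2.+2 - i).+1) /=; last by lia.
split; first by rewrite tadjC; apply: tadj_rail; lia.
exact: setUC.
Qed.

Definition path_pos k (x : vertex) : nat :=
  match x with
  | inl t => if t then 0 else k.*2.+3
  | inr (j, t) => if t then j.+1 else k.*2.+2 - j
  end.

Lemma path_posK k i : k <= h -> i <= k.*2.+3 -> path_pos k (path_vtx k i) = i.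
Proof.
move=> kh i_le; rewrite /path_vtx.
case: ifP => [i_le_k|i_gt_k]; first by case: i i_le_k {i_le} => //= i ?; rewrite inordK //; lia.
case E: (k.*2.+3 - i) => [|j] /=; first by lia.
by rewrite inordK; lia.
Qed.

Lemma vw_tower_path k : k <= h -> vw_path (tower_path k).
Proof.
move=> kh.
have -> : tower_path k = path_vtx k 0 :: map (path_vtx k) (iota 1 k.*2.+3) by [].
apply/and4P; split => //.
- by rewrite (last_map _ _ 0) last_iota /path_vtx ifN ?subnn //; lia.
- rewrite path_map_iota; apply/allP => i; rewrite mem_iota => i_range.
  have i_pos : 0 < i <= k.*2.+3 by lia.
  by case: (path_vtx_step kh i_pos).
- rewrite -[_ :: _]/(tower_path k) map_inj_in_uniq ?iota_uniq // => i j.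
  rewrite !mem_iota => i_range j_range ij.
  by rewrite -(path_posK kh (_ : i <= _)) ?ij ?path_posK //; lia.
Qed.

Lemma path_edges_tower_path k : path_edges (tower_path k) = map (path_edge k) (iota 1 k.*2.+3).
Proof. exact: (pairmap_map_iota edge (path_vtx k) 0 k.*2.+3). Qed.

Definition on_path (K : ekind) j k := if K is Rail _ then j <= k else j == k.

Lemma mem_edge_set_tower_path K j k : j <= h -> k <= h ->
  (tedge K j \in edge_set (tower_path k)) = on_path K j k.
Proof.
move=> jh kh; rewrite inE path_edges_tower_path.
apply/idP/idP => [/mapP [i] | onK].
  rewrite mem_iota => i_range; have i_pos : 0 < i <= k.*2.+3 by lia.
  have [_ ->] := path_vtx_step kh i_pos.
  have level_le : path_level k i <= h by rewrite /path_level; repeat case: ifP; lia.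
  case/tedge_inj => // -> ->.
  by rewrite /on_path /path_kind /path_level; repeat case: ifP; lia.
pose i := if K is Rail t then (if t then j.+1 else k.*2.+3 - j) else k.+2.
have i_range : 0 < i <= k.*2.+3 by case: K onK @i => [|[]] /=; lia.
apply/mapP; exists i; first by rewrite mem_iota; lia.
have [_ ->] := path_vtx_step kh i_range.
rewrite /path_kind /path_level.
case: K onK @i i_range => [|[]] /= onK; repeat case: ifP; try lia.
all: by move=> *; rewrite ?(eqP onK) ?subKn //; lia.
Qed.

Lemma alternating_tower_path S k c : k <= h ->
  (forall t j, j <= k -> rail S t j = c (+) odd j) -> rung S k = c (+) ~~ odd k ->
  alternating S (tower_path k).
Proof.
move=> kh rails rung_k.
have memE i : 0 < i <= k.*2.+3 -> (path_edge k i \in S) = c (+) odd i.-1.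
  move=> i_range; have [_ ->] := path_vtx_step kh i_range.
  rewrite /path_kind /path_level; case: ifP => [i_le | i_gt].
    by rewrite -[_ \in S]/(rail S true i.-1) rails; lia.
  case: ifP => [/eqP-> | i_neq]; first exact: rung_k.
  by rewrite -[_ \in S]/(rail S false _) rails; lia.
rewrite /alternating path_edges_tower_path.
change (path (fun e1 e2 => (e1 \in S) != (e2 \in S))
  (path_edge k 1) (map (path_edge k) (iota 2 k.*2.+2))).
rewrite path_map_iota; apply/allP => i; rewrite mem_iota => i_range.
by rewrite !memE; lia.
Qed.

Definition flip_path S k : state := symdiff S (edge_set (tower_path k)).

Lemma rung_flip_path S k j : j <= h -> k <= h -> rung (flip_path S k) j = rung S j (+) (j == k).
Proof. by move=> jh kh; rewrite /rung in_symdiff mem_edge_set_tower_path. Qed.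

Lemma rail_flip_path S k t j : j <= h -> k <= h -> rail (flip_path S k) t j = rail S t j (+) (j <= k).
Proof. by move=> jh kh; rewrite /rail in_symdiff mem_edge_set_tower_path. Qed.

Lemma edge_set_sub_tedges P : vw_path P -> edge_set P \subset tedges h.
Proof.
case: P => [|x q] //= /and4P [_ _ path_q _]; apply/subsetP => e; rewrite inE.
elim: q x path_q => [|y q IH] x //= /andP [xy path_q].
by rewrite inE => /orP [/eqP-> | /(IH y path_q)] //; apply: tadj_tedges.
Qed.

Lemma flip_path_sub S k : k <= h -> S \subset tedges h -> flip_path S k \subset tedges h.
Proof.
move=> kh /subsetP S_sub; apply/subsetP => e; rewrite in_symdiff.
case: (boolP (e \in S)) => [/S_sub // | _ /= e_P].
exact: subsetP (edge_set_sub_tedges (vw_tower_path kh)) e e_P.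
Qed.

Variant ladder_matching S : Prop :=
  LadderMatching of S \subset tedges h & forall t i, i <= h -> #|[set e in S | tv t i \in e]| = 1.

Definition ladder_degree S t i := rung S i + rail S t i + ((i < h) && rail S t i.+1).

Lemma card_incident S t i : S \subset tedges h -> i <= h ->
  #|[set e in S | tv t i \in e]| = ladder_degree S t i.
Proof.
move=> /subsetP S_sub ih.
pose s := [:: tedge Rung i, tedge (Rail t) i & if i < h then [:: tedge (Rail t) i.+1] else [::]].
have s_uniq : uniq s.
  by rewrite /s; case: ifP => i_lt /=; rewrite !inE !eq_tedge //=; lia.
have -> : [set e in S | tv t i \in e] = [set e in s | e \in S].
  apply/setP => e; rewrite !inE [X in _ = X]andbC; apply: andb_id2l => /S_sub /tedgesP [K [j [jh ->]]].
  rewrite mem_tedge // /s; case: ifP => i_lt; rewrite ?inE ?eq_tedge //= ?in_nil;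
    case: K => [|t'] /=; rewrite ?eq_Rail ?orbF -?andb_orr //.
  by case: (t' == t) => //=; lia.
apply: etrans (card_set_mem_seq S s_uniq) _.
by rewrite /s /ladder_degree; case: ifP => i_lt; rewrite /= ?addn0 ?addnA.
Qed.

Lemma ladder_sub S : ladder_matching S -> S \subset tedges h.
Proof. by case. Qed.

Lemma ladder_degree_eq1 S t i : ladder_matching S -> i <= h -> ladder_degree S t i = 1.
Proof. by case=> S_sub deg ih; rewrite -card_incident ?deg. Qed.

Lemma ladder_matchingP S : S \subset tedges h ->
  (forall t i, i <= h -> ladder_degree S t i = 1) -> ladder_matching S.
Proof. by move=> S_sub deg; split=> // t i ih; rewrite card_incident ?deg. Qed.

Lemma perfect_ladder_matching S : perfect_matching S -> ladder_matching S.
Proof. by case. Qed.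

Variant canonical_upto S p : Prop :=
  CanonicalUpto of p <= h & (forall t j, j <= p -> rail S t j = ~~ odd j) & (odd p -> rung S p).

Lemma semi_default_canonical S : semi_default S -> canonical_upto S 0.
Proof.
case=> vS wS; split=> // t j; rewrite leqn0 => /eqP ->.
by case: t; rewrite /rail /tedge /= (tv_val _ ord0) // /edge setUC.
Qed.

Lemma canonical_unique S S' : ladder_matching S -> ladder_matching S' ->
  canonical_upto S h -> canonical_upto S' h -> S = S'.
Proof.
move=> LS LS' [_ railS _] [_ railS' _].
have railE t j : j <= h -> rail S t j = rail S' t j by move=> jh; rewrite railS // railS'.
have memE K j : j <= h -> (tedge K j \in S) = (tedge K j \in S').
  case: K => [|t] jh; last exact: railE.
  change (rung S j = rung S' j).
  have := ladder_degree_eq1 true LS jh; have := ladder_degree_eq1 true LS' jh.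
  by rewrite /ladder_degree railE //; case: ltnP => j_lt /=; rewrite ?railE //; lia.
apply/setP => e; apply/idP/idP => [eS | eS'].
  by have [K [j [jh eE]]] := tedgesP (subsetP (ladder_sub LS) e eS); rewrite eE -memE // -eE.
by have [K [j [jh eE]]] := tedgesP (subsetP (ladder_sub LS') e eS'); rewrite eE memE // -eE.
Qed.

Lemma canonical_alternating S p : ladder_matching S -> canonical_upto S p ->
  alternating S (tower_path p).
Proof.
move=> LS [ph railS rungS]; apply: (alternating_tower_path (c := true)) => //.
by have := ladder_degree_eq1 true LS ph; rewrite /ladder_degree railS //; lia.
Qed.

Lemma canonical_rail_succ S p t : ladder_matching S -> canonical_upto S p -> p < h ->
  rail S t p.+1 = false.
Proof.
move=> LS [ph railS rungS] p_lt.
by have := ladder_degree_eq1 t LS ph; rewrite /ladder_degree railS // p_lt; lia.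
Qed.

Lemma canonical_gap S p t : ladder_matching S -> canonical_upto S p -> p < h ->
  ~~ rung S p.+1 -> [/\ p.+2 <= h, rail S t p.+2 & ~~ rung S p.+2].
Proof.
move=> LS Cp p_lt no_rung.
have := ladder_degree_eq1 t LS p_lt; rewrite /ladder_degree canonical_rail_succ //.
case: ltnP => p1_lt /= deg1; last by lia.
by have := ladder_degree_eq1 t LS p1_lt; rewrite /ladder_degree => deg2; split; lia.
Qed.

Lemma canonical_extend S p : ladder_matching S -> canonical_upto S p -> ~~ odd p -> p < h ->
  exists2 q, p < q <= p.+2 & canonical_upto S q.
Proof.
move=> LS Cp p_even p_lt; have [ph railS _] := Cp.
have rail1 t := canonical_rail_succ t LS Cp p_lt.
have [rung1 | no_rung1] := boolP (rung S p.+1).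
  exists p.+1; first by lia.
  split=> // t j j_le.
  by have [->|j_ne] := eqVneq j p.+1; [rewrite rail1; lia | rewrite railS; lia].
have [p2_le _ _] := canonical_gap true LS Cp p_lt no_rung1.
exists p.+2; first by lia.
split=> // [t j j_le|]; last by lia.
have [_ rail2 _] := canonical_gap t LS Cp p_lt no_rung1.
have [->|j_ne2] := eqVneq j p.+2; first by rewrite rail2; lia.
by have [->|j_ne1] := eqVneq j p.+1; [rewrite rail1; lia | rewrite railS; lia].
Qed.

Lemma canonical_flip_segment S p q : ladder_matching S -> canonical_upto S p -> odd p -> p < q <= h ->
  (forall t j, p < j <= q -> rail S t j = odd j) -> rung S q = ~~ odd q ->
  ladder_matching (flip_path (flip_path S p) q) /\ canonical_upto (flip_path (flip_path S p) q) q.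
Proof.
move=> LS [ph railS rungS] p_odd /andP [pq qh] segS rung_q.
set S' := flip_path (flip_path S p) q.
have rungE j : j <= h -> rung S' j = rung S j (+) (j == p) (+) (j == q).
  by move=> jh; rewrite !rung_flip_path //; lia.
have railE t j : j <= h -> rail S' t j = rail S t j (+) (j <= p) (+) (j <= q).
  by move=> jh; rewrite !rail_flip_path //; lia.
have railS_le t j : j <= q -> rail S t j = (j <= p) (+) odd j.
  by move=> jq; case: (leqP j p) => jp; [rewrite railS | rewrite segS]; lia.
split.
  apply: ladder_matchingP => [|t i ih]; first by do 2 apply: flip_path_sub => //; case: LS.
  have := ladder_degree_eq1 t LS ih; rewrite /ladder_degree rungE // railE //.
  have [i_lt_p | p_le_i] := ltnP i p.
    by rewrite railE //; lia.
  have [q_lt_i | i_le_q] := ltnP q i.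
    by case: ltnP => i_lt /=; rewrite ?railE //; lia.
  have rail_i := railS_le t i i_le_q.
  have [i_eq_q | i_ne_q] := eqVneq i q.
    by subst i; case: ltnP => q_lt /=; rewrite ?railE // rung_q; lia.
  have i_lt_q : i < q by rewrite ltn_neqAle i_ne_q.
  have i_lt_h : i < h := leq_trans i_lt_q qh.
  rewrite i_lt_h railE // !railS_le // i_lt_q /=.
  have [i_eq_p | i_ne_p] := eqVneq i p.
    by subst i; rewrite (rungS p_odd) p_odd leqnn ltnn.
  have p_lt_i : p < i by rewrite ltn_neqAle eq_sym i_ne_p.
  by rewrite leqNgt p_lt_i leqNgt ltnW //=; case: (odd i); lia.
split=> // [t j jq|q_odd].
  by rewrite railE ?railS_le ?(leq_trans jq qh) // jq; case: (j <= p); case: (odd j).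
by rewrite rungE // rung_q; lia.
Qed.

Lemma canonical_flip_step S p : ladder_matching S -> canonical_upto S p -> odd p -> p < h ->
  exists2 q, p < q <= p.+2 &
  [/\ alternating S (tower_path p), alternating (flip_path S p) (tower_path q),
      ladder_matching (flip_path (flip_path S p) q)
    & canonical_upto (flip_path (flip_path S p) q) q].
Proof.
move=> LS Cp p_odd p_lt; have [ph railS rungS] := Cp.
have rail1 t := canonical_rail_succ t LS Cp p_lt.
pose q := if rung S p.+1 then p.+1 else p.+2.
have [pq qh segS rung_q] : [/\ p < q <= p.+2, q <= h,
    forall t j, p < j <= q -> rail S t j = odd j & rung S q = ~~ odd q].
  rewrite /q; case: ifP => [rung1 | /negbT no_rung1].
    split; [lia | lia | move=> t j /andP [pj jq] | by rewrite rung1 /= p_odd].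
    have -> : j = p.+1 by lia.
    by rewrite rail1; lia.
  have [p2_le _ no_rung2] := canonical_gap true LS Cp p_lt no_rung1.
  split; [lia | lia | move=> t j /andP [pj jq] | by rewrite (negbTE no_rung2); lia].
  have [_ rail2 _] := canonical_gap t LS Cp p_lt no_rung1.
  have [->|->] : j = p.+1 \/ j = p.+2 by lia.
    by rewrite rail1; lia.
  by rewrite rail2; lia.
have pqh : p < q <= h by lia.
have [LS' CS'] := canonical_flip_segment LS Cp p_odd pqh segS rung_q.
exists q => //; split=> //; first exact: canonical_alternating.
apply: (alternating_tower_path (c := false)) => // [t j jq|]; last by rewrite rung_flip_path //; lia.
rewrite rail_flip_path //; try lia.
by case: (leqP j p) => jp; [rewrite railS | rewrite segS]; lia.
Qed.

Lemma canonical_advance S p : ladder_matching S -> canonical_upto S p -> p < h ->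
  exists q Ps, [/\ p < q <= p.+2, size Ps = (odd p).*2, well_behaved S Ps,
                  ladder_matching (flip_all S Ps) & canonical_upto (flip_all S Ps) q].
Proof.
move=> LS Cp p_lt; case: (boolP (odd p)) => [p_odd | p_even].
  have [q pq [alt_p alt_q LS' CS']] := canonical_flip_step LS Cp p_odd p_lt.
  have [qh _ _] := CS'.
  exists q, [:: tower_path p; tower_path q]; split=> //.
  apply/and3P; split=> //; first exact: vw_tower_path (ltnW p_lt).
  by apply/and3P; split=> //; apply: vw_tower_path.
have [q pq Cq] := canonical_extend LS Cp p_even p_lt.
by exists q, [::].
Qed.

Lemma reach_canonical S p : ladder_matching S -> canonical_upto S p ->
  exists2 d, d.*2 <= h - p + odd p &
  exists Ps, [/\ size Ps = d.*2, well_behaved S Ps,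
                 ladder_matching (flip_all S Ps) & canonical_upto (flip_all S Ps) h].
Proof.
have [n] := ubnP (h - p); elim: n S p => // n IH S p hp_lt LS Cp.
have [p_lt | p_ge] := ltnP p h; last first.
  have p_eq : p = h by case: Cp; lia.
  by subst p; exists 0 => //; exists [::].
have [q [Ps [pq size_Ps wb_Ps LPs CPs]]] := canonical_advance LS Cp p_lt.
have [qh _ _] := CPs.
have [|d d_le [Ps' [size_Ps' wb_Ps' LPs' CPs']]] := IH _ q _ LPs CPs; first by lia.
exists (odd p + d); first by lia.
exists (Ps ++ Ps'); rewrite size_cat well_behaved_cat flip_all_cat wb_Ps size_Ps size_Ps'.
by split=> //; lia.
Qed.

End TowerGadget.

Theorem mainTheorem8 (h : nat) (M1 M2 : {set {set tvert h}}) :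
  perfect_matching M1 -> perfect_matching M2 ->
  semi_default M1 -> semi_default M2 ->
  exists Ps : seq (seq (tvert h)),
    [/\ size Ps = 2 * h, well_behaved M1 Ps & flip_all M1 Ps = M2].
Proof.
move=> pm1 pm2 sd1 sd2.
have [d1 d1_le [Ps1 [size1 wb1 L1 C1]]] :=
  reach_canonical (perfect_ladder_matching pm1) (semi_default_canonical sd1).
have [d2 d2_le [Ps2 [size2 wb2 L2 C2]]] :=
  reach_canonical (perfect_ladder_matching pm2) (semi_default_canonical sd2).
have meet := canonical_unique L1 L2 C1 C2.
have [size_idle wb_idle fa_idle] :=
  well_behaved_repeat (h - d1 - d2) (vw_tower_path (leqnn h)) (canonical_alternating L1 C1).
exists (Ps1 ++ flatten (nseq (h - d1 - d2) [:: tower_path h h; tower_path h h]) ++ rev Ps2).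
rewrite !size_cat size_rev size1 size_idle size2 !well_behaved_cat !flip_all_cat.
rewrite wb1 wb_idle fa_idle meet flip_all_rev well_behaved_rev //.
by split=> //; lia.
Qed.
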